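(* Let $\mathcal V\subseteq B(H)$ be an operator system and suppose $p\in\mathcal V$ is a projection in $B(H)$. Then for any $x\in\mathcal V$ with $x=x^*$, we have $pxp\ge0$ in $B(H)$ if and only if for every $\epsilon>0$ there exists $t>0$ such that $x+\epsilon p+t(I-p)\ge 0$. *)

From HB Require Import structures.
From mathcomp Require Import all_boot all_order all_algebra.
From mathcomp Require Import reals.
From mathcomp Require Import complex.
Set Implicit Arguments. Unset Strict Implicit. Unset Printing Implicit Defensive.
Import Order.TTheory GRing.Theory Num.Theory.
Local Open Scope ring_scope.
Local Open Scope complex_scope.

Section Hilbert.
Variables (R : realType) (H : lmodType R[i]) (ip : H -> H -> R[i]).

Definition is_inner_product : Prop :=
  [/\ forall (a : R[i]) (u v w : H), ip (a *: u + v) w = a * ip u w + ip v w,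
      forall u v : H, ip u v = conjc (ip v u),
      forall u : H, 0 <= ip u u &
      forall u : H, ip u u = 0 -> u = 0].

Definition ipnorm (h : H) : R := Num.sqrt (complex.Re (ip h h)).

Definition ip_complete : Prop :=
  forall u : nat -> H,
    (forall e : R, 0 < e -> exists N, forall m n, (N <= m)%N -> (N <= n)%N ->
        ipnorm (u m - u n) < e) ->
    exists l : H, forall e : R, 0 < e -> exists N, forall n, (N <= n)%N ->
        ipnorm (u n - l) < e.

Definition is_hilbert : Prop := is_inner_product /\ ip_complete.

Definition bounded_op (T : H -> H) : Prop :=
  (forall (a : R[i]) (u v : H), T (a *: u + v) = a *: T u + T v) /\
  exists M : R, forall h : H, ipnorm (T h) <= M * ipnorm h.

Definition is_adjoint (T S : H -> H) : Prop :=
  forall u v : H, ip (T u) v = ip u (S v).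

Definition selfadjoint (T : H -> H) : Prop := is_adjoint T T.

Definition op_pos (T : H -> H) : Prop := forall h : H, 0 <= ip (T h) h.

Definition projection (p : H -> H) : Prop :=
  bounded_op p /\ selfadjoint p /\ (forall h, p (p h) = p h).

Definition operator_system (V : (H -> H) -> Prop) : Prop :=
  (forall T, V T -> bounded_op T) /\
  V (fun h => h) /\
  V (fun _ => 0) /\
  (forall S T, V S -> V T -> V (fun h => S h + T h)) /\
  (forall (a : R[i]) T, V T -> V (fun h => a *: T h)) /\
  (forall T, V T -> exists S, V S /\ is_adjoint T S).
End Hilbert.

From HB Require Import structures.
From mathcomp Require Import all_boot all_order all_algebra.
From mathcomp Require Import reals complex.
From mathcomp Require Import lra.
Import Order.TTheory GRing.Theory Num.Theory.
Local Open Scope ring_scope.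
Local Open Scope complex_scope.
Set Implicit Arguments. Unset Strict Implicit.

(* Write h = a + b with a = p h and b = h - p h.  These are orthogonal, so
   <(x + eps p + t (I - p)) h, h> = <x h, h> + eps |a|^2 + t |b|^2, and
   <x h, h> = <x a, a> + 2 Re <x a, b> + <x b, b>.  Since x is bounded,
   |<x w, w>| <= C |w|^2; applied to w = a + k b with k = 1 + C / eps this
   bounds the cross term by <x a, a>, eps |a|^2 and a multiple of |b|^2, so
   t = 2 C k + 1 makes the form nonnegative as soon as <x a, a> >= 0.
   Conversely, at h = p h the form reduces to <x p h, p h> + eps |p h|^2. *)

Lemma Re_realM (R : rcfType) (r : R) (z : R[i]) :
  complex.Re (r%:C * z) = r * complex.Re z.
Proof. by case: z => a b /=; rewrite mul0r subr0. Qed.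

Lemma fixed_conjc_real (R : rcfType) (z : R[i]) : z^* = z -> z = (complex.Re z)%:C.
Proof. by case: z => a b [] Eb; rewrite /= (_ : b = 0) //; lra. Qed.

Lemma ge0_of_addM_ge0 (F : realFieldType) (r s : F) :
  0 <= s -> (forall eps, 0 < eps -> 0 <= r + eps * s) -> 0 <= r.
Proof.
move=> s_ge0 r_eps; apply/ler_addgt0Pr => e e_gt0.
have s1_gt0 : 0 < s + 1 by lra.
have d_gt0 : 0 < e / (s + 1) by rewrite divr_gt0.
have de : e / (s + 1) * (s + 1) = e by rewrite mulfVK ?gt_eqF.
have := r_eps _ d_gt0; lra.
Qed.

(* qa, c, qb: coefficients of a quadratic form on the span of orthogonal a, b
   with |a|^2 = A, |b|^2 = B; the last hypothesis is its bound -C |w|^2 at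
   w = a + k b. *)
Lemma orthogonal_form_perturb_ge0 (F : realFieldType) (C eps qa qb c A B k : F) :
  0 <= C -> 0 <= qa -> 0 <= A -> 0 <= B -> qb <= C * B -> 1 <= k -> C <= k * eps ->
  - (C * (A + k ^+ 2 * B)) <= qa + k * c + k ^+ 2 * qb ->
  0 <= qa + c + qb + eps * A + (2 * C * k + 1) * B.
Proof.
move=> C_ge0 qa_ge0 A_ge0 B_ge0 qbC k_ge1 C_le hk.
have k_gt0 : 0 < k by lra.
suff : 0 <= k * (qa + c + qb + eps * A + (2 * C * k + 1) * B) by rewrite pmulr_rge0.
have h1 : 0 <= (k - 1) * qa by rewrite mulr_ge0 // subr_ge0.
have h2 : 0 <= (k ^+ 2 - k) * (C * B - qb) by rewrite mulr_ge0 // subr_ge0; nra.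
have h3 : 0 <= (k * eps - C) * A by rewrite mulr_ge0 // subr_ge0.
have h4 : 0 <= (C * k + k) * B by rewrite mulr_ge0 //; nra.
lra.
Qed.

Section InnerProduct.
Variables (R : realType) (H : lmodType R[i]) (ip : H -> H -> R[i]).
Hypothesis ip_inner : is_inner_product ip.

Lemma ipDl u v w : ip (u + v) w = ip u w + ip v w.
Proof. by case: ip_inner => ipl _ _ _; rewrite -[u]scale1r ipl mul1r scale1r. Qed.

Lemma ip0l w : ip 0 w = 0.
Proof. by apply: (addrI (ip 0 w)); rewrite -ipDl !addr0. Qed.

Lemma ipZl a u w : ip (a *: u) w = a * ip u w.
Proof. by case: ip_inner => ipl _ _ _; rewrite -[a *: u]addr0 ipl ip0l addr0. Qed.

Lemma ipC u v : ip u v = (ip v u)^*.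
Proof. by case: ip_inner. Qed.

Lemma ipDr u v w : ip u (v + w) = ip u v + ip u w.
Proof. by rewrite ipC ipDl rmorphD /= -!ipC. Qed.

Lemma ip0r w : ip w 0 = 0.
Proof. by rewrite ipC ip0l conjc0. Qed.

Lemma ipZr (r : R) u w : ip u (r%:C *: w) = r%:C * ip u w.
Proof. by rewrite ipC ipZl rmorphM /= -ipC /conjc /= oppr0. Qed.

Lemma ipBl u v w : ip (u - v) w = ip u w - ip v w.
Proof. by rewrite ipDl -scaleN1r ipZl mulN1r. Qed.

Lemma ipBr u v w : ip u (v - w) = ip u v - ip u w.
Proof. by rewrite ipC ipBl rmorphB /= -!ipC. Qed.

Definition qform (T : H -> H) (w : H) : R := complex.Re (ip (T w) w).

Lemma qform_id_ge0 w : 0 <= qform id w.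
Proof. by case: ip_inner => _ _ /(_ w); rewrite lecE => /andP[]. Qed.

Lemma ge0_selfadjoint_qform T w :
  selfadjoint ip T -> (0 <= ip (T w) w) = (0 <= qform T w).
Proof. by move=> T_sa; rewrite [ip _ _]fixed_conjc_real ?ler0c // -ipC T_sa. Qed.

Lemma qformDZ T : {morph T : u v / u + v} -> (forall a, {morph T : u / a *: u}) ->
  forall u v (k : R), qform T (u + k%:C *: v) =
    qform T u + k * (complex.Re (ip (T u) v) + complex.Re (ip (T v) u)) + k ^+ 2 * qform T v.
Proof.
move=> TD TZ u v k; rewrite /qform TD TZ !ipDl !ipDr !ipZl !ipZr.
by rewrite !raddfD /= !Re_realM; lra.
Qed.

Lemma bounded_opD T : bounded_op ip T -> {morph T : u v / u + v}.
Proof. by case=> T_lin _ u v; rewrite -[u]scale1r T_lin !scale1r. Qed.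

Lemma bounded_opZ T : bounded_op ip T -> forall a, {morph T : u / a *: u}.
Proof.
move=> T_bd a u; have T0 : T 0 = 0.
  by apply: (addrI (T 0)); rewrite -bounded_opD // !addr0.
by case: T_bd => T_lin _; rewrite -[a *: u]addr0 T_lin T0 addr0.
Qed.

Lemma bounded_opB T : bounded_op ip T -> forall u v, T (u - v) = T u - T v.
Proof. by move=> T_bd u v; rewrite bounded_opD // -scaleN1r bounded_opZ // scaleN1r. Qed.

Lemma selfadjoint_qform_bounded x : bounded_op ip x -> selfadjoint ip x ->
  exists2 C, 0 <= C & forall w, `|qform x w| <= C * qform id w.
Proof.
move=> x_bd x_sa; have [_ [M xM]] := x_bd.
exists (M ^+ 2 + 1); first by rewrite addr_ge0 ?sqr_ge0.
move=> w; have w_ge0 := qform_id_ge0 w.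
have xw_le : qform id (x w) <= M ^+ 2 * qform id w.
  rewrite -ler_sqrt; last by rewrite mulr_ge0 ?sqr_ge0.
  rewrite (sqrtrM _ (sqr_ge0 M)) sqrtr_sqr.
  exact: le_trans (xM w) (ler_wpM2r (sqrtr_ge0 _) (ler_norm M)).
have expand k : qform id (x w + k%:C *: w) =
    qform id (x w) + k * (2 * qform x w) + k ^+ 2 * qform id w.
  by rewrite qformDZ //= -x_sa mulr2n mulrDl mul1r.
have := qform_id_ge0 (x w + 1%:C *: w); have := qform_id_ge0 (x w + (-1)%:C *: w).
rewrite !expand ler_norml; lra.
Qed.

Section Compression.
Variables (x p : H -> H).
Hypotheses (x_bounded : bounded_op ip x) (x_sa : selfadjoint ip x).
Hypothesis p_proj : projection ip p.

Definition perturb (eps t : R) (h : H) : H := x h + eps%:C *: p h + t%:C *: (h - p h).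

Lemma p_sa : selfadjoint ip p. Proof. by case: p_proj => _ []. Qed.

Lemma p_idem h : p (p h) = p h. Proof. by case: p_proj => _ []. Qed.

Lemma p_compl h : p (h - p h) = 0.
Proof. by case: p_proj => p_bd _; rewrite bounded_opB // p_idem subrr. Qed.

Lemma selfadjoint_perturb eps t : selfadjoint ip (perturb eps t).
Proof. by move=> u v; rewrite /perturb !ipDl !ipZl !ipBl !ipDr !ipZr !ipBr x_sa p_sa. Qed.

Lemma qform_perturb eps t h :
  qform (perturb eps t) h = qform x h + eps * qform id (p h) + t * qform id (h - p h).
Proof.
have ph_h : ip (p h) h = ip (p h) (p h) by rewrite -{1}p_idem p_sa.
have b_h : ip (h - p h) h = ip (h - p h) (h - p h).
  by rewrite [in RHS]ipBr -p_sa p_compl ip0l subr0.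
by rewrite {1}/qform /perturb ipDl ipDl !ipZl !raddfD /= !Re_realM ph_h b_h.
Qed.

Lemma op_pos_perturb_of_compress : op_pos ip (fun h => p (x (p h))) ->
  forall eps, 0 < eps -> exists t, 0 < t /\ op_pos ip (perturb eps t).
Proof.
move=> pxp_ge0 eps eps_gt0.
have [C C_ge0 xC] := selfadjoint_qform_bounded x_bounded x_sa.
pose k := 1 + C / eps.
have k_ge1 : 1 <= k by rewrite lerDl divr_ge0 // ltW.
have C_le : C <= k * eps by rewrite mulrDl mul1r mulfVK ?gt_eqF // lerDr ltW.
exists (2 * C * k + 1); split=> [|h].
  by rewrite ltr_wpDl // !mulr_ge0 // (le_trans ler01 k_ge1).
have qa_ge0 : 0 <= qform x (p h) by rewrite -ge0_selfadjoint_qform // -p_sa.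
rewrite ge0_selfadjoint_qform; last exact: selfadjoint_perturb.
rewrite qform_perturb.
have ab0 : ip (p h) (h - p h) = 0 by rewrite p_sa p_compl ip0r.
have ba0 : ip (h - p h) (p h) = 0 by rewrite -p_sa p_compl ip0l.
have [xD xZ] := (bounded_opD x_bounded, bounded_opZ x_bounded).
have h_split : h = p h + 1%:C *: (h - p h) by rewrite scale1r addrC subrK.
rewrite {1}h_split qformDZ // mul1r expr1n mul1r.
apply: (orthogonal_form_perturb_ge0 C_ge0 qa_ge0 (qform_id_ge0 _) (qform_id_ge0 _)) => //.
  by have := xC (h - p h); rewrite ler_norml => /andP[].
have := xC (p h + k%:C *: (h - p h)); rewrite ler_norml => /andP[+ _].
by rewrite !qformDZ // ab0 ba0 /= addr0 mulr0 addr0.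
Qed.

Lemma compress_op_pos_of_perturb :
  (forall eps, 0 < eps -> exists t, 0 < t /\ op_pos ip (perturb eps t)) ->
  op_pos ip (fun h => p (x (p h))).
Proof.
move=> pert_ge0 h /=; rewrite p_sa ge0_selfadjoint_qform //.
apply: (ge0_of_addM_ge0 (qform_id_ge0 (p h))) => eps eps_gt0.
have [t [_ /(_ (p h))]] := pert_ge0 eps eps_gt0.
rewrite /perturb p_idem subrr scaler0 addr0 lecE => /andP[_].
by rewrite ipDl ipZl raddfD /= Re_realM.
Qed.

End Compression.
End InnerProduct.

Theorem lemma4p5 (R : realType) (H : lmodType R[i]) (ip : H -> H -> R[i])
  (hH : is_hilbert ip) (V : (H -> H) -> Prop) (hV : operator_system ip V)
  (p : H -> H) (pV : V p) (hp : projection ip p)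
  (x : H -> H) (xV : V x) (hx : selfadjoint ip x) :
  op_pos ip (fun h => p (x (p h))) <->
  (forall eps : R, 0 < eps -> exists t : R, 0 < t /\
     op_pos ip (fun h => x h + eps%:C *: p h + t%:C *: (h - p h))).
Proof.
have [[ip_inner _] [op_bounded _]] := (hH, hV).
split; first exact: op_pos_perturb_of_compress (op_bounded _ xV) hx hp.
exact: compress_op_pos_of_perturb.
Qed.
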